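(* Let $\boldsymbol{S}\in\mathrm{Mat}(M,M,\mathbb{C})$ be invertible, $\boldsymbol{U}\in\mathrm{Mat}(m,M,\mathbb{C})$, $\boldsymbol{V}\in\mathrm{Mat}(M,m,\mathbb{C})$, $\boldsymbol{T}\in\mathrm{Mat}(M,M,\mathbb{C})$ invertible, and suppose the Sylvester equation $\boldsymbol{S}\boldsymbol{K}+\boldsymbol{K}\boldsymbol{S}=\boldsymbol{V}\boldsymbol{U}$ has a solution. Let $\boldsymbol{\Xi}=e^{-\boldsymbol{S}x-\boldsymbol{S}^{-1}y}$ with $x,y$ real, and for a solution $\boldsymbol{K}$ and $p_0\in\mathrm{Mat}(m,m,\mathbb{C})$ define $$q=\boldsymbol{U}\boldsymbol{\Xi}\,(\boldsymbol{I}_M+(\boldsymbol{K}\boldsymbol{\Xi})^2)^{-1}\boldsymbol{V},\qquad p=p_0-\boldsymbol{U}\boldsymbol{\Xi}\boldsymbol{K}\boldsymbol{\Xi}\,(\boldsymbol{I}_M+(\boldsymbol{K}\boldsymbol{\Xi})^2)^{-1}\boldsymbol{V}$$ wherever the inverse exists. (1) If $\boldsymbol{T}^\dagger=\boldsymbol{T}$, $\boldsymbol{S}^\dagger=\boldsymbol{T}\boldsymbol{S}\boldsymbol{T}^{-1}$ and $\boldsymbol{U}=\boldsymbol{V}^\dagger\boldsymbol{T}$, then the Sylvester equation has a solution $\boldsymbol{K}$ with $\boldsymbol{K}^\dagger=\boldsymbol{T}\boldsymbol{K}\boldsymbol{T}^{-1}$, and for any such $\boldsymbol{K}$ and any Hermitian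 $p_0$, the matrices $q$ and $p$ are Hermitian ($q^\dagger=q$, $p^\dagger=p$), so that they solve the Hermitian reduction of the system $p_{xy}=(q^2)_y$, $q_{xy}=q-p_yq-qp_y$. (2) If $\bar{\boldsymbol{T}}=\boldsymbol{T}^{-1}$, $\bar{\boldsymbol{S}}=\boldsymbol{T}\boldsymbol{S}\boldsymbol{T}^{-1}$, $\bar{\boldsymbol{U}}=\boldsymbol{U}\boldsymbol{T}^{-1}$ and $\bar{\boldsymbol{V}}=\boldsymbol{T}\boldsymbol{V}$, then the Sylvester equation has a solution $\boldsymbol{K}$ with $\bar{\boldsymbol{K}}=\boldsymbol{T}\boldsymbol{K}\boldsymbol{T}^{-1}$, and for any such $\boldsymbol{K}$ and any real $p_0$ ($\bar p_0=p_0$), one has $\bar q=q$ and $\bar p=p$, so that $q,p$ solve the complex conjugation (real) reduction of the system $p_{xy}=(q^2)_y$, $q_{xy}=q-p_yq-qp_y$.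
   Context: ${}^\dagger$ denotes the conjugate transpose and a bar denotes entrywise complex conjugation; $\boldsymbol{I}_M$ is the $M\times M$ identity matrix; $e^{(\cdot)}$ is the matrix exponential; subscripts denote partial derivatives. *)

From Stdlib Require Import Reals Arith Factorial.
Open Scope R_scope.

Record C := mkC { Cre : R; Cim : R }.
Definition C0 : C := mkC 0 0.
Definition C1 : C := mkC 1 0.
Definition RtoC (r : R) : C := mkC r 0.
Definition Cadd (a b : C) : C := mkC (Cre a + Cre b) (Cim a + Cim b).
Definition Copp (a : C) : C := mkC (- Cre a) (- Cim a).
Definition Cmul (a b : C) : C :=
  mkC (Cre a * Cre b - Cim a * Cim b) (Cre a * Cim b + Cim a * Cre b).
Definition Cconj (a : C) : C := mkC (Cre a) (- Cim a).

Fixpoint Csum (n : nat) (f : nat -> C) : C :=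
  match n with
  | O => C0
  | S k => Cadd (Csum k f) (f k)
  end.

(** Matrices: entry (i,j); only entries with i < rows, j < cols are meaningful. *)
Definition Mat := nat -> nat -> C.

Definition meq (r c : nat) (A B : Mat) : Prop :=
  forall i j, (i < r)%nat -> (j < c)%nat -> A i j = B i j.

Definition mmul (n : nat) (A B : Mat) : Mat :=
  fun i j => Csum n (fun k => Cmul (A i k) (B k j)).
Definition madd (A B : Mat) : Mat := fun i j => Cadd (A i j) (B i j).
Definition mopp (A : Mat) : Mat := fun i j => Copp (A i j).
Definition msub (A B : Mat) : Mat := madd A (mopp B).
Definition mscaleR (r : R) (A : Mat) : Mat := fun i j => Cmul (RtoC r) (A i j).
Definition mid : Mat := fun i j => if Nat.eqb i j then C1 else C0.
Definition adj (A : Mat) : Mat := fun i j => Cconj (A j i).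
Definition mconj (A : Mat) : Mat := fun i j => Cconj (A i j).

Definition is_inverse (n : nat) (A B : Mat) : Prop :=
  meq n n (mmul n A B) mid /\ meq n n (mmul n B A) mid.

Fixpoint mpow (n : nat) (A : Mat) (k : nat) : Mat :=
  match k with
  | O => mid
  | S k' => mmul n (mpow n A k') A
  end.
Fixpoint exp_partial (n : nat) (A : Mat) (N : nat) : Mat :=
  match N with
  | O => mid
  | S N' => madd (exp_partial n A N')
                 (mscaleR (/ INR (fact N)) (mpow n A N))
  end.
Definition is_mexp (n : nat) (A E : Mat) : Prop :=
  forall i j, (i < n)%nat -> (j < n)%nat ->
    Un_cv (fun N => Cre (exp_partial n A N i j)) (Cre (E i j)) /\
    Un_cv (fun N => Cim (exp_partial n A N i j)) (Cim (E i j)).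

Definition sylvester (M m : nat) (S U V K : Mat) : Prop :=
  meq M M (madd (mmul M S K) (mmul M K S)) (mmul m V U).

(** q = U Xi W V and p = p0 - U Xi K Xi W V, where W = (I_M + (K Xi)^2)^{-1} *)
Definition qmat (M : nat) (U V Xi W : Mat) : Mat :=
  mmul M (mmul M (mmul M U Xi) W) V.
Definition pmat (M : nat) (p0 U V K Xi W : Mat) : Mat :=
  msub p0 (mmul M (mmul M (mmul M (mmul M (mmul M U Xi) K) Xi) W) V).

Definition Xi_arg (S Sinv : Mat) (x y : R) : Mat :=
  msub (mopp (mscaleR x S)) (mscaleR y Sinv).
Definition denom (M : nat) (K Xi : Mat) : Mat :=
  madd mid (mmul M (mmul M K Xi) (mmul M K Xi)).

(* Both reductions come from a map sigma on M x M matrices that fixes S and sends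
   solutions of the Sylvester equation to solutions: sigma A = T^-1 A^+ T in case (1)
   (an anti-automorphism) and sigma A = T^-1 conj(A) T in case (2) (an automorphism).
   sigma is a real-linear involution, so averaging a solution K0 with sigma K0 gives a
   sigma-invariant solution. Invariance of S passes to S^-1, to -S x - S^-1 y, to every
   partial sum of the exponential series and, by continuity, to Xi. Finally T Xi and
   T Xi K Xi intertwine the image of D = I + (K Xi)^2 under A |-> A^+ (resp. conj A)
   with D, hence also the image of W = D^-1 with W, which makes q and p invariant. *)

From Stdlib Require Import Reals Lra Lia.
From mathcomp Require Import all_boot all_algebra.
From mathcomp Require Import complex Rstruct.
Import GRing.Theory Num.Theory.
Set Implicit Arguments. Unset Strict Implicit. Unset Printing Implicit Defensive.
Local Open Scope ring_scope.

Local Notation conjm := (map_mx conjc).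

Definition Ccv (u : nat -> C) (l : C) : Prop :=
  Un_cv (fun N => Cre (u N)) (Cre l) /\ Un_cv (fun N => Cim (u N)) (Cim l).

Lemma cv_const (c : R) : Un_cv (fun _ => c) c.
Proof. by move=> e he; exists 0%N => n _; rewrite R_dist_eq; exact: he. Qed.

Lemma Ccv_ext (u v : nat -> C) (l : C) : (forall N, u N = v N) -> Ccv u l -> Ccv v l.
Proof.
by move=> uv [hre him]; split; [apply: Un_cv_ext hre | apply: Un_cv_ext him] => N; rewrite uv.
Qed.

Lemma Ccv_unique (u : nat -> C) (a b : C) : Ccv u a -> Ccv u b -> a = b.
Proof.
case: a b => [a1 a2] [b1 b2] [h1 h2] [h3 h4].
by move: (UL_sequence _ _ _ h1 h3) (UL_sequence _ _ _ h2 h4) => /= -> ->.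
Qed.

Lemma Ccv_add (u v : nat -> C) (a b : C) :
  Ccv u a -> Ccv v b -> Ccv (fun N => Cadd (u N) (v N)) (Cadd a b).
Proof. by move=> [h1 h2] [h3 h4]; split; apply: CV_plus. Qed.

Lemma Ccv_mull (a : C) (u : nat -> C) (l : C) :
  Ccv u l -> Ccv (fun N => Cmul a (u N)) (Cmul a l).
Proof.
by move=> [h1 h2]; split; [apply: CV_minus | apply: CV_plus]; apply: CV_mult => //; apply: cv_const.
Qed.

Lemma Ccv_mulr (a : C) (u : nat -> C) (l : C) :
  Ccv u l -> Ccv (fun N => Cmul (u N) a) (Cmul l a).
Proof.
by move=> [h1 h2]; split; [apply: CV_minus | apply: CV_plus]; apply: CV_mult => //; apply: cv_const.
Qed.

Lemma Ccv_conj (u : nat -> C) (l : C) :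
  Ccv u l -> Ccv (fun N => Cconj (u N)) (Cconj l).
Proof. by move=> [h1 h2]; split=> //; apply: CV_opp. Qed.

Lemma Ccv_sum (n : nat) (f : nat -> nat -> C) (l : nat -> C) :
  (forall k, (k < n)%coq_nat -> Ccv (fun N => f N k) (l k)) ->
  Ccv (fun N => Csum n (f N)) (Csum n l).
Proof.
elim: n => [|n IH] H /=; first by split; apply: cv_const.
by apply: Ccv_add; [apply: IH => k hk |]; apply: H; lia.
Qed.

(* [is_mexp n A E] is literally [mcv n (exp_partial n A) E]. *)
Definition mcv (n : nat) (P : nat -> Mat) (E : Mat) : Prop :=
  forall i j, (i < n)%coq_nat -> (j < n)%coq_nat -> Ccv (fun N => P N i j) (E i j).

Lemma mcv_adj (n : nat) (P : nat -> Mat) (E : Mat) :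
  mcv n P E -> mcv n (fun N => adj (P N)) (adj E).
Proof. by move=> H i j hi hj; apply/Ccv_conj/H. Qed.

Lemma mcv_conj (n : nat) (P : nat -> Mat) (E : Mat) :
  mcv n P E -> mcv n (fun N => mconj (P N)) (mconj E).
Proof. by move=> H i j hi hj; apply/Ccv_conj/H. Qed.

Lemma mcv_mmull (n : nat) (A : Mat) (P : nat -> Mat) (E : Mat) :
  mcv n P E -> mcv n (fun N => mmul n A (P N)) (mmul n A E).
Proof. by move=> H i j hi hj; apply: Ccv_sum => k hk; apply/Ccv_mull/H. Qed.

Lemma mcv_mmulr (n : nat) (A : Mat) (P : nat -> Mat) (E : Mat) :
  mcv n P E -> mcv n (fun N => mmul n (P N) A) (mmul n E A).
Proof. by move=> H i j hi hj; apply: Ccv_sum => k hk; apply/Ccv_mulr/H. Qed.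

Lemma mcv_unique (n : nat) (P Q : nat -> Mat) (E F : Mat) :
  (forall N, meq n n (P N) (Q N)) -> mcv n P E -> mcv n Q F -> meq n n E F.
Proof.
move=> PQ hP hQ i j hi hj; apply: (Ccv_unique (hP i j hi hj)).
by apply: Ccv_ext (hQ i j hi hj) => N; rewrite PQ.
Qed.

Lemma is_mexp_twisted (f : Mat -> Mat) (n : nat) (A E T Tinv : Mat) :
  (forall P F, mcv n P F -> mcv n (fun N => f (P N)) (f F)) ->
  (forall N, meq n n (f (exp_partial n A N)) (mmul n (mmul n T (exp_partial n A N)) Tinv)) ->
  is_mexp n A E -> meq n n (f E) (mmul n (mmul n T E) Tinv).
Proof. by move=> hf fP HE; apply: mcv_unique fP (hf _ _ HE) _; apply/mcv_mmulr/mcv_mmull. Qed.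

Definition toC (z : C) : R[i] := (Cre z +i* Cim z)%C.

Lemma toC_add (a b : C) : toC (Cadd a b) = toC a + toC b.
Proof. by case: a; case: b. Qed.
Lemma toC_mul (a b : C) : toC (Cmul a b) = toC a * toC b.
Proof. by case: a; case: b. Qed.
Lemma toC_opp (a : C) : toC (Copp a) = - toC a.
Proof. by case: a. Qed.
Lemma toC_conj (a : C) : toC (Cconj a) = (toC a)^*%C.
Proof. by case: a. Qed.
Lemma toC_inj : injective toC.
Proof. by case=> ? ? [? ?] [-> ->]. Qed.
Lemma toC_sum (n : nat) (f : nat -> C) : toC (Csum n f) = \sum_(k < n) toC (f k).
Proof. by elim: n => [|n IH] /=; rewrite ?big_ord0 // toC_add IH big_ord_recr. Qed.

Definition toM (r c : nat) (A : Mat) : 'M[R[i]]_(r, c) := \matrix_(i < r, j < c) toC (A i j).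

Lemma meqE (r c : nat) (A B : Mat) : meq r c A B <-> toM r c A = toM r c B.
Proof.
split=> [H | H i j /ltP hi /ltP hj].
- by apply/matrixP => i j; rewrite !mxE H //; apply/ltP.
- apply: toC_inj; have := congr1 (fun X : 'M_(r, c) => X (Ordinal hi) (Ordinal hj)) H.
  by rewrite !mxE.
Qed.

Definition adjm r c (A : 'M[R[i]]_(r, c)) : 'M[R[i]]_(c, r) := (conjm A)^T.

Lemma toM_mul (r n c : nat) (A B : Mat) : toM r c (mmul n A B) = toM r n A *m toM n c B.
Proof.
apply/matrixP => i j; rewrite !mxE toC_sum.
by apply: eq_bigr => k _; rewrite toC_mul !mxE.
Qed.
Lemma toM_add (r c : nat) (A B : Mat) : toM r c (madd A B) = toM r c A + toM r c B.
Proof. by apply/matrixP => i j; rewrite !mxE toC_add. Qed.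
Lemma toM_opp (r c : nat) (A : Mat) : toM r c (mopp A) = - toM r c A.
Proof. by apply/matrixP => i j; rewrite !mxE toC_opp. Qed.
Lemma toM_sub (r c : nat) (A B : Mat) : toM r c (msub A B) = toM r c A - toM r c B.
Proof. by rewrite toM_add toM_opp. Qed.
Lemma toM_scale (r c : nat) (x : R) (A : Mat) : toM r c (mscaleR x A) = (x%:C)%C *: toM r c A.
Proof. by apply/matrixP => i j; rewrite !mxE toC_mul. Qed.
Lemma toM_mid (n : nat) : toM n n mid = 1%:M.
Proof.
apply/matrixP => i j; rewrite !mxE /mid.
by case: Nat.eqb_spec => [/val_inj -> | ne]; rewrite ?eqxx // (introF eqP) // => /(congr1 val).
Qed.
Lemma toM_adj (r c : nat) (A : Mat) : toM r c (adj A) = adjm (toM c r A).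
Proof. by apply/matrixP => i j; rewrite !mxE toC_conj. Qed.
Lemma toM_conj (r c : nat) (A : Mat) : toM r c (mconj A) = conjm (toM r c A).
Proof. by apply/matrixP => i j; rewrite !mxE toC_conj. Qed.
Lemma toM_pow (n k : nat) (A : Mat) : toM n n (mpow n A k) = toM n n A ^+ k.
Proof. by elim: k => [|k IH] /=; rewrite ?toM_mid // exprSr toM_mul IH mulmxE. Qed.
Lemma toM_exp_partialS (n N : nat) (A : Mat) :
  toM n n (exp_partial n A N.+1) =
  toM n n (exp_partial n A N) + ((/ INR (Factorial.fact N.+1))%R%:C)%C *: toM n n A ^+ N.+1.
Proof. by rewrite [LHS]toM_add toM_scale toM_pow. Qed.

Definition toME := (toM_mul, toM_add, toM_sub, toM_opp, toM_scale, toM_mid, toM_adj, toM_conj).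

Section AdjointAlgebra.
Variables (r c : nat).
Implicit Types A B : 'M[R[i]]_(r, c).

Lemma adjmM n A (B : 'M_(c, n)) : adjm (A *m B) = adjm B *m adjm A.
Proof. by rewrite /adjm map_mxM trmx_mul. Qed.
Lemma adjmD A B : adjm (A + B) = adjm A + adjm B.
Proof. by rewrite /adjm map_mxD linearD. Qed.
Lemma adjmB A B : adjm (A - B) = adjm A - adjm B.
Proof. by rewrite /adjm map_mxB linearB. Qed.
Lemma adjmN A : adjm (- A) = - adjm A.
Proof. by rewrite /adjm map_mxN linearN. Qed.
Lemma adjmZ a A : adjm (a *: A) = a^*%C *: adjm A.
Proof. by rewrite /adjm map_mxZ linearZ. Qed.
Lemma conjmZ a A : conjm (a *: A) = a^*%C *: conjm A.
Proof. by apply/matrixP => i j; rewrite !mxE rmorphM. Qed.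
Lemma adjmK A : adjm (adjm A) = A.
Proof. by apply/matrixP => i j; rewrite !mxE conjcK. Qed.
Lemma conjmK A : conjm (conjm A) = A.
Proof. by apply/matrixP => i j; rewrite !mxE conjcK. Qed.

End AdjointAlgebra.

Lemma adjm1 n : adjm (1%:M : 'M[R[i]]_n) = 1%:M.
Proof. by rewrite /adjm map_mx1 trmx1. Qed.

Lemma adjmX n (X : 'M[R[i]]_n) k : adjm (X ^+ k) = adjm X ^+ k.
Proof.
elim: k => [|k IH]; first by rewrite !expr0 adjm1.
by rewrite exprS exprSr -!mulmxE adjmM IH.
Qed.

Lemma conjmX n (X : 'M[R[i]]_n) k : conjm (X ^+ k) = conjm X ^+ k.
Proof.
elim: k => [|k IH]; first by rewrite !expr0 map_mx1.
by rewrite !exprS -!mulmxE map_mxM IH.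
Qed.

Lemma sylvester_symmetrize (F : comPzRingType) n (f : 'M[F]_n -> 'M_n) (a : F) (S C K0 : 'M_n) :
  a + a = 1 -> {morph f : A B / A + B} -> (forall A, f (a *: A) = a *: f A) ->
  involutive f -> (forall K, S *m K + K *m S = C -> S *m f K + f K *m S = C) ->
  S *m K0 + K0 *m S = C ->
  let K := a *: (K0 + f K0) in S *m K + K *m S = C /\ f K = K.
Proof.
move=> half fD fZ fK fS hK0 K; split.
- rewrite -scalemxAr -scalemxAl -scalerDr mulmxDr mulmxDl addrACA hK0 (fS _ hK0).
  by rewrite scalerDr -scalerDl half scale1r.
- by rewrite /K fZ fD fK addrC.
Qed.

Lemma half_C : ((/2)%R%:C + (/2)%R%:C = 1 :> R[i])%C.
Proof.
apply/eqP; rewrite eq_complex /= addr0 eqxx andbT; apply/eqP.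
change (Rplus (/2) (/2) = R1); lra.
Qed.

Lemma mulmx_intertwine (F : pzRingType) n (D D' W W' Y : 'M[F]_n) :
  D *m W = 1%:M -> W' *m D' = 1%:M -> D' *m Y = Y *m D -> W' *m Y = Y *m W.
Proof.
move=> DW WD' DY.
by rewrite -[W' *m Y]mulmx1 -DW !mulmxA -(mulmxA W') -DY mulmxA WD' mul1mx.
Qed.

Lemma mulmx_inv_uniq (F : pzRingType) n (A B C : 'M[F]_n) :
  B *m A = 1%:M -> A *m C = 1%:M -> B = C.
Proof. by move=> hBA hAC; rewrite -[B]mulmx1 -hAC mulmxA hBA mul1mx. Qed.

Section Twist.
Variables (n : nat) (T Ti : 'M[R[i]]_n).
Hypotheses (TiT : Ti *m T = 1%:M) (TTi : T *m Ti = 1%:M).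

Lemma mulmxTiT r (Z : 'M_(r, n)) : Z *m Ti *m T = Z.
Proof. by rewrite -mulmxA TiT mulmx1. Qed.

Lemma mulmxTTi r (Z : 'M_(r, n)) : Z *m T *m Ti = Z.
Proof. by rewrite -mulmxA TTi mulmx1. Qed.

Lemma twisted_eq (A B : 'M_n) : Ti *m B *m T = A -> B = T *m A *m Ti.
Proof. by move<-; rewrite !mulmxA TTi mul1mx mulmxTTi. Qed.

Lemma twistX (X : 'M_n) k : T *m X ^+ k *m Ti = (T *m X *m Ti) ^+ k.
Proof.
elim: k => [|k IH]; first by rewrite !expr0 mulmx1.
by rewrite !exprSr -!mulmxE -IH !mulmxA mulmxTiT.
Qed.

Lemma adjm_inv (S Si : 'M_n) :
  S *m Si = 1%:M -> adjm S = T *m S *m Ti -> adjm Si = T *m Si *m Ti.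
Proof.
move=> SSi adjS; apply: (mulmx_inv_uniq (A := adjm S)).
- by rewrite -adjmM SSi adjm1.
- by rewrite adjS !mulmxA mulmxTiT -(mulmxA T) SSi mulmx1 TTi.
Qed.

Lemma conjm_inv (S Si : 'M_n) :
  S *m Si = 1%:M -> conjm S = T *m S *m Ti -> conjm Si = T *m Si *m Ti.
Proof.
move=> SSi conjS; apply: (mulmx_inv_uniq (A := conjm S)).
- by rewrite -map_mxM (mulmx1C SSi) map_mx1.
- by rewrite conjS !mulmxA mulmxTiT -(mulmxA T) SSi mulmx1 TTi.
Qed.

Lemma adjm_exp_partial (A : Mat) N :
  adjm (toM n n A) = T *m toM n n A *m Ti ->
  adjm (toM n n (exp_partial n A N)) = T *m toM n n (exp_partial n A N) *m Ti.
Proof.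
move=> adjA; elim: N => [|N IH]; first by rewrite /= toM_mid adjm1 mulmx1 TTi.
rewrite toM_exp_partialS adjmD adjmZ conjc_real IH adjmX adjA -twistX.
by rewrite mulmxDr mulmxDl -scalemxAr -scalemxAl.
Qed.

Lemma conjm_exp_partial (A : Mat) N :
  conjm (toM n n A) = T *m toM n n A *m Ti ->
  conjm (toM n n (exp_partial n A N)) = T *m toM n n (exp_partial n A N) *m Ti.
Proof.
move=> conjA; elim: N => [|N IH]; first by rewrite /= toM_mid map_mx1 mulmx1 TTi.
rewrite toM_exp_partialS map_mxD conjmZ conjc_real IH conjmX conjA -twistX.
by rewrite mulmxDr mulmxDl -scalemxAr -scalemxAl.
Qed.

Section Hermitian.
Hypothesis adjT : adjm T = T.

Definition adj_twist (A : 'M_n) : 'M_n := Ti *m adjm A *m T.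

Lemma adjm_Ti : adjm Ti = Ti.
Proof.
by apply: (mulmx_inv_uniq (A := T)) => //; rewrite -[X in _ *m X]adjT -adjmM TTi adjm1.
Qed.

Lemma adj_twistD : {morph adj_twist : A B / A + B}.
Proof. by move=> A B; rewrite /adj_twist adjmD mulmxDr mulmxDl. Qed.

Lemma adj_twistZ (x : R) (A : 'M_n) : adj_twist ((x%:C)%C *: A) = (x%:C)%C *: adj_twist A.
Proof. by rewrite /adj_twist adjmZ conjc_real -scalemxAr -scalemxAl. Qed.

Lemma adj_twistK : involutive adj_twist.
Proof. by move=> A; rewrite /adj_twist !adjmM adjmK adjT adjm_Ti !mulmxA TiT mul1mx mulmxTiT. Qed.

Lemma adj_twist_sylvester m (S : 'M_n) (U : 'M_(m, n)) (V : 'M_(n, m)) :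
  adjm S = T *m S *m Ti -> U = adjm V *m T -> forall K,
  S *m K + K *m S = V *m U -> S *m adj_twist K + adj_twist K *m S = V *m U.
Proof.
move=> adjS hU K hK.
have STi : S *m Ti = Ti *m adjm S by rewrite adjS !mulmxA TiT mul1mx.
have TS r (Z : 'M_(r, n)) : Z *m T *m S = Z *m adjm S *m T.
  by rewrite adjS !mulmxA mulmxTiT.
have -> : S *m adj_twist K + adj_twist K *m S = Ti *m adjm (S *m K + K *m S) *m T.
  by rewrite adjmD !adjmM mulmxDr mulmxDl /adj_twist !mulmxA STi TS addrC.
by rewrite hK hU !adjmM adjmK adjT !mulmxA TiT mul1mx.
Qed.

Lemma adj_twist_symmetrize m (S K0 : 'M_n) (U : 'M_(m, n)) (V : 'M_(n, m)) :
  adjm S = T *m S *m Ti -> U = adjm V *m T -> S *m K0 + K0 *m S = V *m U ->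
  let K := ((/2)%R%:C)%C *: (K0 + Ti *m adjm K0 *m T) in
  S *m K + K *m S = V *m U /\ adjm K = T *m K *m Ti.
Proof.
move=> adjS hU hK0 /=.
have [] := sylvester_symmetrize half_C adj_twistD (@adj_twistZ _) adj_twistK
  (adj_twist_sylvester adjS hU) hK0.
by move=> -> /twisted_eq.
Qed.

Lemma hermitian_qp_mx m (K X W : 'M_n) (U : 'M_(m, n)) (V : 'M_(n, m)) (p0 : 'M_m) :
  U = adjm V *m T -> adjm K = T *m K *m Ti -> adjm X = T *m X *m Ti ->
  (1%:M + K *m X *m (K *m X)) *m W = 1%:M -> adjm p0 = p0 ->
  adjm (U *m X *m W *m V) = U *m X *m W *m V /\
  adjm (p0 - U *m X *m K *m X *m W *m V) = p0 - U *m X *m K *m X *m W *m V.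
Proof.
move=> hU adjK adjX DW adjp0; set D := 1%:M + _ in DW.
have adjU : adjm U = T *m V by rewrite hU adjmM adjT adjmK.
have adjD : adjm D = 1%:M + T *m X *m K *m X *m K *m Ti.
  by rewrite adjmD adjm1 !adjmM adjK adjX !mulmxA !mulmxTiT.
have adjWD : adjm W *m adjm D = 1%:M by rewrite -adjmM DW adjm1.
have WX r (Z : 'M_(r, n)) : Z *m adjm W *m T *m X = Z *m T *m X *m W.
  rewrite -!mulmxA (mulmxA T); congr (Z *m _); apply: (mulmx_intertwine DW adjWD).
  by rewrite adjD mulmxDl mulmxDr mul1mx mulmx1 !mulmxA !mulmxTiT.
have WXKX r (Z : 'M_(r, n)) :
    Z *m adjm W *m T *m X *m K *m X = Z *m T *m X *m K *m X *m W.
  rewrite -!mulmxA !(mulmxA T) !(mulmxA (T *m X)) !(mulmxA (T *m X *m K)).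
  congr (Z *m _); apply: (mulmx_intertwine DW adjWD).
  by rewrite adjD mulmxDl mulmxDr mul1mx mulmx1 !mulmxA !mulmxTiT.
split.
- by rewrite !adjmM adjU adjX hU !mulmxA mulmxTiT WX.
- by rewrite adjmB adjp0 !adjmM adjU adjX adjK hU !mulmxA !mulmxTiT WXKX.
Qed.

End Hermitian.

Section Real.
Hypothesis conjT : conjm T = Ti.

Definition conj_twist (A : 'M_n) : 'M_n := Ti *m conjm A *m T.

Lemma conjm_Ti : conjm Ti = T.
Proof. by rewrite -conjT conjmK. Qed.

Lemma conj_twistD : {morph conj_twist : A B / A + B}.
Proof. by move=> A B; rewrite /conj_twist map_mxD mulmxDr mulmxDl. Qed.

Lemma conj_twistZ (x : R) (A : 'M_n) : conj_twist ((x%:C)%C *: A) = (x%:C)%C *: conj_twist A.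
Proof. by rewrite /conj_twist conjmZ conjc_real -scalemxAr -scalemxAl. Qed.

Lemma conj_twistK : involutive conj_twist.
Proof.
by move=> A; rewrite /conj_twist !map_mxM conjmK conjT conjm_Ti !mulmxA TiT mul1mx mulmxTiT.
Qed.

Lemma conj_twist_sylvester m (S : 'M_n) (U : 'M_(m, n)) (V : 'M_(n, m)) :
  conjm S = T *m S *m Ti -> conjm U = U *m Ti -> conjm V = T *m V -> forall K,
  S *m K + K *m S = V *m U -> S *m conj_twist K + conj_twist K *m S = V *m U.
Proof.
move=> conjS conjU conjV K hK.
have STi : S *m Ti = Ti *m conjm S by rewrite conjS !mulmxA TiT mul1mx.
have TS r (Z : 'M_(r, n)) : Z *m T *m S = Z *m conjm S *m T.
  by rewrite conjS !mulmxA mulmxTiT.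
have -> : S *m conj_twist K + conj_twist K *m S = Ti *m conjm (S *m K + K *m S) *m T.
  by rewrite map_mxD !map_mxM mulmxDr mulmxDl /conj_twist !mulmxA STi TS.
by rewrite hK map_mxM conjU conjV !mulmxA TiT mul1mx mulmxTiT.
Qed.

Lemma conj_twist_symmetrize m (S K0 : 'M_n) (U : 'M_(m, n)) (V : 'M_(n, m)) :
  conjm S = T *m S *m Ti -> conjm U = U *m Ti -> conjm V = T *m V ->
  S *m K0 + K0 *m S = V *m U ->
  let K := ((/2)%R%:C)%C *: (K0 + Ti *m conjm K0 *m T) in
  S *m K + K *m S = V *m U /\ conjm K = T *m K *m Ti.
Proof.
move=> conjS conjU conjV hK0 /=.
have [] := sylvester_symmetrize half_C conj_twistD (@conj_twistZ _) conj_twistK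
  (conj_twist_sylvester conjS conjU conjV) hK0.
by move=> -> /twisted_eq.
Qed.

Lemma real_qp_mx m (K X W : 'M_n) (U : 'M_(m, n)) (V : 'M_(n, m)) (p0 : 'M_m) :
  conjm U = U *m Ti -> conjm V = T *m V ->
  conjm K = T *m K *m Ti -> conjm X = T *m X *m Ti ->
  (1%:M + K *m X *m (K *m X)) *m W = 1%:M -> conjm p0 = p0 ->
  conjm (U *m X *m W *m V) = U *m X *m W *m V /\
  conjm (p0 - U *m X *m K *m X *m W *m V) = p0 - U *m X *m K *m X *m W *m V.
Proof.
move=> conjU conjV conjK conjX DW conjp0; set D := 1%:M + _ in DW.
have conjD : conjm D = 1%:M + T *m K *m X *m K *m X *m Ti.
  by rewrite map_mxD map_mx1 !map_mxM conjK conjX !mulmxA !mulmxTiT.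
have conjWD : conjm W *m conjm D = 1%:M by rewrite -map_mxM (mulmx1C DW) map_mx1.
have WT r (Z : 'M_(r, n)) : Z *m conjm W *m T = Z *m T *m W.
  rewrite -!mulmxA; congr (Z *m _); apply: (mulmx_intertwine DW conjWD).
  by rewrite conjD mulmxDl mulmxDr mul1mx mulmx1 !mulmxA !mulmxTiT.
split.
- by rewrite !map_mxM conjU conjV conjX !mulmxA mulmxTiT WT mulmxTiT.
- by rewrite map_mxB conjp0 !map_mxM conjU conjV conjX conjK !mulmxA !mulmxTiT WT mulmxTiT.
Qed.

End Real.
End Twist.

Lemma is_inverse_toM n (A B : Mat) :
  is_inverse n A B -> toM n n A *m toM n n B = 1%:M /\ toM n n B *m toM n n A = 1%:M.
Proof. by case=> /meqE + /meqE; rewrite !toME. Qed.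

Lemma hermitian_mexp n (A E T Tinv : Mat) :
  is_inverse n T Tinv -> meq n n (adj A) (mmul n (mmul n T A) Tinv) -> is_mexp n A E ->
  meq n n (adj E) (mmul n (mmul n T E) Tinv).
Proof.
move=> /is_inverse_toM [TTi TiT] /meqE; rewrite !toME => adjA.
apply: is_mexp_twisted => [P F|N]; first exact: mcv_adj.
by apply/meqE; rewrite !toME (adjm_exp_partial TiT TTi _ adjA).
Qed.

Lemma real_mexp n (A E T Tinv : Mat) :
  is_inverse n T Tinv -> meq n n (mconj A) (mmul n (mmul n T A) Tinv) -> is_mexp n A E ->
  meq n n (mconj E) (mmul n (mmul n T E) Tinv).
Proof.
move=> /is_inverse_toM [TTi TiT] /meqE; rewrite !toME => conjA.
apply: is_mexp_twisted => [P F|N]; first exact: mcv_conj.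
by apply/meqE; rewrite !toME (conjm_exp_partial TiT TTi _ conjA).
Qed.

Lemma hermitian_sylvester_solution m M (S U V T Tinv K0 : Mat) :
  is_inverse M T Tinv -> meq M M (adj T) T ->
  meq M M (adj S) (mmul M (mmul M T S) Tinv) -> meq m M U (mmul M (adj V) T) ->
  sylvester M m S U V K0 ->
  exists K, sylvester M m S U V K /\ meq M M (adj K) (mmul M (mmul M T K) Tinv).
Proof.
move=> /is_inverse_toM [TTi TiT] /meqE + /meqE + /meqE + /meqE.
rewrite !toME => adjT adjS hU hK0.
exists (mscaleR (/2) (madd K0 (mmul M (mmul M Tinv (adj K0)) T))).
have [] := adj_twist_symmetrize TiT TTi adjT adjS hU hK0.
by split; apply/meqE; rewrite !toME.
Qed.

Lemma real_sylvester_solution m M (S U V T Tinv K0 : Mat) :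
  is_inverse M T Tinv -> meq M M (mconj T) Tinv ->
  meq M M (mconj S) (mmul M (mmul M T S) Tinv) -> meq m M (mconj U) (mmul M U Tinv) ->
  meq M m (mconj V) (mmul M T V) -> sylvester M m S U V K0 ->
  exists K, sylvester M m S U V K /\ meq M M (mconj K) (mmul M (mmul M T K) Tinv).
Proof.
move=> /is_inverse_toM [TTi TiT] /meqE + /meqE + /meqE + /meqE + /meqE.
rewrite !toME => conjT conjS conjU conjV hK0.
exists (mscaleR (/2) (madd K0 (mmul M (mmul M Tinv (mconj K0)) T))).
have [] := conj_twist_symmetrize TiT TTi conjT conjS conjU conjV hK0.
by split; apply/meqE; rewrite !toME.
Qed.

Lemma hermitian_qp m M (S Sinv U V T Tinv K p0 Xi W : Mat) (x y : R) :
  is_inverse M S Sinv -> is_inverse M T Tinv -> meq M M (adj T) T ->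
  meq M M (adj S) (mmul M (mmul M T S) Tinv) -> meq m M U (mmul M (adj V) T) ->
  meq M M (adj K) (mmul M (mmul M T K) Tinv) -> meq m m (adj p0) p0 ->
  is_mexp M (Xi_arg S Sinv x y) Xi -> is_inverse M (denom M K Xi) W ->
  meq m m (adj (qmat M U V Xi W)) (qmat M U V Xi W) /\
  meq m m (adj (pmat M p0 U V K Xi W)) (pmat M p0 U V K Xi W).
Proof.
move=> /is_inverse_toM [SSi _] HT /meqE + /meqE + /meqE + /meqE + /meqE + HXi [/meqE + _].
have [TTi TiT] := is_inverse_toM HT.
rewrite /denom !toME => adjT adjS hU adjK adjp0 DW.
have adjSi := adjm_inv TiT TTi SSi adjS.
have adjXi : adjm (toM M M Xi) = toM M M T *m toM M M Xi *m toM M M Tinv.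
  rewrite -toM_adj -!toM_mul -meqE; apply: hermitian_mexp HT _ HXi.
  apply/meqE; rewrite /Xi_arg !toME adjmB adjmN !adjmZ !conjc_real adjS adjSi.
  by rewrite mulmxBr mulmxBl mulmxN mulNmx -!scalemxAr -!scalemxAl.
have [] := hermitian_qp_mx TiT adjT hU adjK adjXi DW adjp0.
by split; apply/meqE; rewrite /qmat /pmat !toME.
Qed.

Lemma real_qp m M (S Sinv U V T Tinv K p0 Xi W : Mat) (x y : R) :
  is_inverse M S Sinv -> is_inverse M T Tinv ->
  meq M M (mconj S) (mmul M (mmul M T S) Tinv) -> meq m M (mconj U) (mmul M U Tinv) ->
  meq M m (mconj V) (mmul M T V) ->
  meq M M (mconj K) (mmul M (mmul M T K) Tinv) -> meq m m (mconj p0) p0 ->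
  is_mexp M (Xi_arg S Sinv x y) Xi -> is_inverse M (denom M K Xi) W ->
  meq m m (mconj (qmat M U V Xi W)) (qmat M U V Xi W) /\
  meq m m (mconj (pmat M p0 U V K Xi W)) (pmat M p0 U V K Xi W).
Proof.
move=> /is_inverse_toM [SSi _] HT /meqE + /meqE + /meqE + /meqE + /meqE + HXi [/meqE + _].
have [TTi TiT] := is_inverse_toM HT.
rewrite /denom !toME => conjS conjU conjV conjK conjp0 DW.
have conjSi := conjm_inv TiT TTi SSi conjS.
have conjXi : conjm (toM M M Xi) = toM M M T *m toM M M Xi *m toM M M Tinv.
  rewrite -toM_conj -!toM_mul -meqE; apply: real_mexp HT _ HXi.
  apply/meqE; rewrite /Xi_arg !toME map_mxB map_mxN !conjmZ !conjc_real conjS conjSi.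
  by rewrite mulmxBr mulmxBl mulmxN mulNmx -!scalemxAr -!scalemxAl.
have [] := real_qp_mx TiT conjU conjV conjK conjXi DW conjp0.
by split; apply/meqE; rewrite /qmat /pmat !toME.
Qed.

Theorem proposition2 (m M : nat) (S U V T Sinv Tinv : Mat) :
  is_inverse M S Sinv ->
  is_inverse M T Tinv ->
  (exists K0, sylvester M m S U V K0) ->
  ( (meq M M (adj T) T /\
     meq M M (adj S) (mmul M (mmul M T S) Tinv) /\
     meq m M U (mmul M (adj V) T)) ->
    (exists K, sylvester M m S U V K /\
               meq M M (adj K) (mmul M (mmul M T K) Tinv)) /\
    (forall (K p0 : Mat),
       sylvester M m S U V K ->
       meq M M (adj K) (mmul M (mmul M T K) Tinv) ->
       meq m m (adj p0) p0 ->
       forall (x y : R) (Xi W : Mat),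
         is_mexp M (Xi_arg S Sinv x y) Xi ->
         is_inverse M (denom M K Xi) W ->
         meq m m (adj (qmat M U V Xi W)) (qmat M U V Xi W) /\
         meq m m (adj (pmat M p0 U V K Xi W)) (pmat M p0 U V K Xi W)) ) /\
  ( (meq M M (mconj T) Tinv /\
     meq M M (mconj S) (mmul M (mmul M T S) Tinv) /\
     meq m M (mconj U) (mmul M U Tinv) /\
     meq M m (mconj V) (mmul M T V)) ->
    (exists K, sylvester M m S U V K /\
               meq M M (mconj K) (mmul M (mmul M T K) Tinv)) /\
    (forall (K p0 : Mat),
       sylvester M m S U V K ->
       meq M M (mconj K) (mmul M (mmul M T K) Tinv) ->
       meq m m (mconj p0) p0 ->
       forall (x y : R) (Xi W : Mat),
         is_mexp M (Xi_arg S Sinv x y) Xi ->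
         is_inverse M (denom M K Xi) W ->
         meq m m (mconj (qmat M U V Xi W)) (qmat M U V Xi W) /\
         meq m m (mconj (pmat M p0 U V K Xi W)) (pmat M p0 U V K Xi W)) ).
Proof.
move=> HS HT [K0 HK0]; split.
- move=> [adjT [adjS hU]]; split; first exact: hermitian_sylvester_solution HK0.
  move=> K p0 _ adjK adjp0 x y Xi W HXi HW.
  exact: hermitian_qp HS HT adjT adjS hU adjK adjp0 HXi HW.
- move=> [conjT [conjS [conjU conjV]]]; split; first exact: real_sylvester_solution HK0.
  move=> K p0 _ conjK conjp0 x y Xi W HXi HW.
  exact: real_qp HS HT conjS conjU conjV conjK conjp0 HXi HW.
Qed.
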